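(* Let $\mathfrak S$ be a commutative semiring and let $\sigma_{\mathfrak S}$ be the set of all finitely generated proper ideals of $\mathfrak S$, endowed with the ideal topology. If $\sigma_{\mathfrak S}$ is quasi-compact, then $\sigma_{\mathfrak S}$ contains all maximal ideals of $\mathfrak S$ (i.e. every maximal ideal of $\mathfrak S$ is finitely generated).
   Context: A semiring $(\mathfrak S,+,0,\cdot,1)$ has $(\mathfrak S,+,0)$ a commutative monoid, $(\mathfrak S,\cdot,1)$ a monoid, $0r=r0=0$, and two-sided distributivity; all semirings are commutative. An ideal is a nonempty proper subset closed under addition and under multiplication by elements of $\mathfrak S$; maximal means not properly contained in another ideal. For an ideal $\mathfrak a$, $\mathfrak a^{\uparrow}=\{\mathfrak x\in\sigma_{\mathfrak S}\mid\mathfrak a\subseteq\mathfrak x\}$; the ideal topology on $\sigma_{\mathfrak S}$ has the sets $\mathfrak a^{\uparrow}$ ($\mathfrak a$ any ideal) as a subbasis of closed sets. Quasi-compact means every open cover has a finite subcover. *)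

From HB Require Import structures.
From mathcomp Require Import all_boot all_order all_algebra.
From mathcomp Require Import classical_sets.
Set Implicit Arguments. Unset Strict Implicit. Unset Printing Implicit Defensive.
Import GRing.Theory.
Local Open Scope classical_set_scope.
Local Open Scope ring_scope.

Section SemiringIdeals.
Variable S : comPzSemiRingType.

Definition is_ideal (a : set S) : Prop :=
  [/\ (exists x, a x), a <> [set: S],
      (forall x y, a x -> a y -> a (x + y)) &
      (forall r x, a x -> a (r * x))].

Definition fin_gen (a : set S) : Prop :=
  exists (n : nat) (g : 'I_n -> S),
    a = [set x | exists r : 'I_n -> S, x = \sum_(i < n) r i * g i].

Definition is_maximal_ideal (m : set S) : Prop :=
  is_ideal m /\ forall b, is_ideal b -> m `<=` b -> b = m.

Definition sigmaS : set (set S) := [set a | is_ideal a /\ fin_gen a].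

Definition up (a : set S) : set (set S) := [set x | sigmaS x /\ a `<=` x].

(* Ideal topology on sigma_S: the sets a^up (a any ideal) form a subbasis of
   closed sets; so the complements sigma_S \ a^up form a subbasis of opens. *)
Definition basic_open (U : set (set S)) : Prop :=
  exists (n : nat) (A : 'I_n -> set S),
    (forall i, is_ideal (A i)) /\
    U = [set x | sigmaS x /\ forall i, ~ up (A i) x].

Definition ideal_open (U : set (set S)) : Prop :=
  exists F : set (set (set S)),
    (forall B, F B -> basic_open B) /\ U = [set x | exists B, F B /\ B x].

Definition sigma_quasi_compact : Prop :=
  forall F : set (set (set S)),
    (forall U, F U -> ideal_open U) ->
    sigmaS `<=` [set x | exists U, F U /\ U x] ->
    exists (n : nat) (U : 'I_n -> set (set S)),
      (forall i, F (U i)) /\ sigmaS `<=` [set x | exists i, U i x].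

End SemiringIdeals.

From mathcomp Require Import all_boot all_order all_algebra.
From mathcomp Require Import classical_sets boolp.
Set Implicit Arguments. Unset Strict Implicit. Unset Printing Implicit Defensive.
Import GRing.Theory.
Local Open Scope classical_set_scope.
Local Open Scope ring_scope.

(** If a maximal ideal m were not finitely generated, the opens
    sigma_S \ (Sx)^up, x in m, would cover sigma_S: a finitely generated proper
    ideal containing m would equal m by maximality.  A finite subcover indexed by
    x_1, ..., x_n is impossible, since the ideal (x_1, ..., x_n) is a proper
    finitely generated ideal (it lies in m) containing every x_i. *)

Section IdealTopology.
Variable S : comPzSemiRingType.
Implicit Types (a b m : set S) (x : S).

Definition span n (g : 'I_n -> S) : set S :=
  [set y | exists r : 'I_n -> S, y = \sum_(i < n) r i * g i].

Definition principal x : set S := span (fun _ : 'I_1 => x).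

Definition co_up a : set (set S) := [set b | sigmaS b /\ ~ up a b].

Lemma ideal0 a : is_ideal a -> a 0.
Proof. by case=> [[x ax] _ _ aM]; rewrite -(mul0r x); apply: aM. Qed.

Lemma span_mem n (g : 'I_n -> S) i : span g (g i).
Proof.
exists (fun j => if j == i then 1 else 0).
rewrite (bigD1 i) //= eqxx mul1r big1 ?addr0 // => j /negbTE ->.
by rewrite mul0r.
Qed.

Lemma span_sub n (g : 'I_n -> S) a :
  is_ideal a -> (forall i, a (g i)) -> span g `<=` a.
Proof.
move=> aI ag y [r ->]; have [_ _ aD aM] := aI.
by apply: (big_ind a) => [||i _]; [exact: ideal0 | exact: aD | exact: aM].
Qed.

Lemma span_is_ideal n (g : 'I_n -> S) a :
  is_ideal a -> (forall i, a (g i)) -> is_ideal (span g).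
Proof.
move=> aI ag; have [_ aT _ _] := aI; split.
- by exists 0, (fun _ => 0); rewrite big1 // => i _; rewrite mul0r.
- move=> gT; apply: aT; apply/seteqP; split=> // y _.
  by apply: span_sub aI ag _ _; rewrite gT.
- move=> _ _ [r ->] [s ->]; exists (fun i => r i + s i).
  by rewrite -big_split; apply: eq_bigr => i _; rewrite mulrDl.
- move=> t _ [r ->]; exists (fun i => t * r i).
  by rewrite mulr_sumr; apply: eq_bigr => i _; rewrite mulrA.
Qed.

Lemma span_sigmaS n (g : 'I_n -> S) a :
  is_ideal a -> (forall i, a (g i)) -> sigmaS (span g).
Proof. by move=> aI ag; split; [apply: span_is_ideal aI ag | exists n, g]. Qed.

Lemma principal_subP a x : is_ideal a -> principal x `<=` a <-> a x.
Proof.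
move=> aI; split=> [xa | ax]; first exact: xa (span_mem _ ord0).
exact: span_sub.
Qed.

Lemma basic_open_co_up a : is_ideal a -> basic_open (co_up a).
Proof.
move=> aI; exists 1%N, (fun _ => a); split=> //.
by apply/seteqP; split=> b [sb nab]; split=> //; apply: nab ord0.
Qed.

Lemma basic_open_ideal_open (U : set (set S)) : basic_open U -> ideal_open U.
Proof.
move=> bU; exists [set U]; split; first by move=> _ ->.
by apply/seteqP; split=> [b Ub | b [_ [-> Ub]]] //; exists U.
Qed.

Lemma maximal_not_sub_sigmaS m a :
  is_maximal_ideal m -> ~ sigmaS m -> sigmaS a -> ~ m `<=` a.
Proof. by move=> [_ mmax] nsm sa ma; apply: nsm; rewrite -(mmax a sa.1 ma). Qed.

End IdealTopology.

Theorem proposition3p6 (S : comPzSemiRingType) :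
  sigma_quasi_compact S ->
  forall m : set S, is_maximal_ideal m -> sigmaS m.
Proof.
move=> qc m mmax; have [mI _] := mmax; apply: contrapT => nsm.
pose F := [set U | exists2 x, m x & U = co_up (principal x)].
have F_open U : F U -> ideal_open U.
  move=> [x mx ->]; apply/basic_open_ideal_open/basic_open_co_up.
  exact: span_is_ideal mI (fun _ => mx).
have F_cover : @sigmaS S `<=` [set b | exists U, F U /\ U b].
  move=> b sb; have [bI _] := sb.
  have [x /not_implyP[mx nbx]] :=
    (existsNP _).2 (maximal_not_sub_sigmaS mmax nsm sb).
  exists (co_up (principal x)); split; first by exists x.
  by split=> // -[_ /(principal_subP _ bI)].
have [n [U [FU cover]]] := qc F F_open F_cover.
have /all_sig[g /all_and2[mg Ug]] : forall i, {x | m x & U i = co_up (principal x)}.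
  by move=> i; apply/cid2/FU.
have sa := span_sigmaS mI mg.
have [i] := cover _ sa; rewrite Ug => -[_]; apply; split=> //.
by apply/(principal_subP _ sa.1)/span_mem.
Qed.
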